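(* Let $1\le S\le N$ and $\mathcal{A}=\{A\subseteq\{1,\dots,N\}:|A|\le S\}$. Let $X_1,\dots,X_N$ be i.i.d. random variables taking values $H$ and $L$, $H>L>0$, with probabilities $p\in(0,1)$ and $1-p$. Then for every $r>1$, $$\sup\{\mathrm{ELR}(\tilde\pi^o): 0<L<H\le rL,\ p\in(0,1)\}\le \frac{S}{S+N},$$ and $$\sup\{\mathrm{ELR}(\tilde\pi^o): 0<L<H,\ p\in(0,1)\}=\frac{S}{S+N}.$$
   Context: This models an auction of $S$ identical items among $N$ unit-demand buyers with values $X_n$ (independent). An allocation rule $\pi$ maps each bid vector $v\in\{L,H\}^N$ to a probability distribution $(\pi_A(v))_{A\in\mathcal{A}}$ on $\mathcal{A}$; $Q_n(v)=\sum_{A\ni n}\pi_A(v)$. The (monotone) virtual valuation is $\overline{w}(H)=H$, $\overline{w}(L)=(L-pH)/(1-p)$. An allocation rule is optimal (the allocation rule of a revenue-maximizing Bayesian incentive compatible, individually rational mechanism) if for every $v$, $\pi(v)$ is supported on $\arg\max_{A\in\mathcal{A}}\sum_{n\in A}\overline{w}(v_n)$. $\tilde\pi^o$ denotes an optimal allocation rule maximizing realized welfare $\mathbb{E}[\sum_nQ_n(X)X_n]$ among optimal allocation rules. $\mathrm{MSW}=\mathbb{E}[\max_{A\in\mathcal{A}}\sum_{n\in A}X_n]$ and $\mathrm{ELR}(\pi)=(\mathrm{MSW}-\mathbb{E}[\sum_nQ_n(X)X_n])/\mathrm{MSW}$. *)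

From HB Require Import structures.
From mathcomp Require Import all_boot all_order all_algebra.
From mathcomp Require Import reals.
Set Implicit Arguments. Unset Strict Implicit. Unset Printing Implicit Defensive.
Import Order.TTheory GRing.Theory Num.Theory.
Local Open Scope ring_scope.

(* Bid / value profiles: v n = true means buyer n has value H, false means L. *)
Definition bids (N : nat) := {ffun 'I_N -> bool}.

Section Auction.
Variables (R : realType) (N S : nat) (L H p : R).

Definition val (b : bool) : R := if b then H else L.

Definition vval (b : bool) : R := if b then H else (L - p * H) / (1 - p).

Definition prob (v : bids N) : R := \prod_(n < N) (if v n then p else 1 - p).

Definition alloc_rule (pi : bids N -> {set 'I_N} -> R) : Prop :=
  forall v : bids N,
    [/\ forall A, 0 <= pi v A,
        forall A, pi v A != 0 -> (#|A| <= S)%N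
      & \sum_(A : {set 'I_N}) pi v A = 1].

Definition Qn (pi : bids N -> {set 'I_N} -> R) (n : 'I_N) (v : bids N) : R :=
  \sum_(A : {set 'I_N} | n \in A) pi v A.

Definition is_optimal (pi : bids N -> {set 'I_N} -> R) : Prop :=
  alloc_rule pi /\
  forall (v : bids N) (A : {set 'I_N}), pi v A != 0 ->
    forall B : {set 'I_N}, (#|B| <= S)%N ->
      \sum_(n in B) vval (v n) <= \sum_(n in A) vval (v n).

Definition welfare (pi : bids N -> {set 'I_N} -> R) : R :=
  \sum_(v : bids N) prob v * \sum_(n < N) Qn pi n v * val (v n).

Definition MSW : R :=
  \sum_(v : bids N) prob v *
    \big[Num.max/0]_(A : {set 'I_N} | (#|A| <= S)%N) \sum_(n in A) val (v n).

Definition ELR (pi : bids N -> {set 'I_N} -> R) : R := (MSW - welfare pi) / MSW.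

Definition is_tilde_opt (pi : bids N -> {set 'I_N} -> R) : Prop :=
  is_optimal pi /\ forall pi', is_optimal pi' -> welfare pi' <= welfare pi.

End Auction.

Arguments is_tilde_opt {R} N S L H p pi.
Arguments ELR {R} N S L H p pi.

(* Let k be the number of high bidders and w = (L - pH)/(1 - p) the virtual
   value of a low bidder.  If w >= 0, giving the S items to the S highest values
   is revenue optimal, so the welfare-maximizing optimal rule loses nothing.  If
   w < 0, every optimal rule sells to exactly min(k, S) high bidders, so with
   e = E[min(k, S)] the loss ratio is L(S - e)/(He + L(S - e)), decreasing in e.
   A quadratic lower bound for min(k, S) together with E[k] = Np and
   E[k^2] = Np(1 + (N - 1)p) gives e (S + (N - 1)p) >= SNp, which with L < pH
   yields the bound S/(S + N).  For H = 1, p = d, L = (1 - d)d we have w < 0 and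
   e <= Nd, so the ratio tends to S/(S + N) as d -> 0. *)

From Pilot Require Import Defs.
From HB Require Import structures.
From mathcomp Require Import all_boot all_order all_algebra.
From mathcomp Require Import reals.
From mathcomp Require Import ring lra zify.
Set Implicit Arguments. Unset Strict Implicit. Unset Printing Implicit Defensive.
Import Order.TTheory GRing.Theory Num.Theory.
Local Open Scope ring_scope.

Lemma exists_subset_card (T : finType) (B : {set T}) k :
  (k <= #|B|)%N -> exists2 A : {set T}, A \subset B & #|A| = k.
Proof.
rewrite -bin_gt0 -cards_draws => /card_gt0P[A].
by rewrite inE => /andP[sAB /eqP kA]; exists A.
Qed.

Lemma exists_card_setI (T : finType) (C : {set T}) m : (m <= #|T|)%N ->
  exists2 B : {set T}, #|B| = m & #|B :&: C| = minn m #|C|.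
Proof.
move=> mT; have [B1 sB1C cB1] := @exists_subset_card _ C (minn m #|C|) (geq_minr _ _).
have [B2 sB2C cB2] : exists2 B2 : {set T}, B2 \subset ~: C & #|B2| = (m - minn m #|C|)%N.
  by apply: exists_subset_card; have := cardsC C; lia.
have B2C : B2 :&: C = set0.
  by apply/setP=> x; rewrite !inE; apply/andP=> -[/(subsetP sB2C)]; rewrite inE => /negbTE ->.
exists (B1 :|: B2).
  rewrite cardsU (_ : B1 :&: B2 = set0) ?cards0 ?subn0 ?cB1 ?cB2 ?subnKC ?geq_minl //.
  apply/setP=> x; rewrite !inE; apply/andP=> -[/(subsetP sB1C) xC /(subsetP sB2C)].
  by rewrite inE xC.
by rewrite setIUl B2C setU0 (setIidPl sB1C).
Qed.

Section Counting.
Variables (R : realDomainType) (T : finType) (g : T -> bool).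

Lemma sum_bool_split (f : bool -> R) (C : {set T}) :
  \sum_(x in C) f (g x) =
  #|C :&: [set x | g x]|%:R * f true
    + (#|C|%:R - #|C :&: [set x | g x]|%:R) * f false.
Proof.
rewrite (big_setID [set x | g x]) /= -natrB ?subset_leq_card ?subsetIl // -cardsD.
rewrite (eq_bigr (fun=> f true)) => [|x]; last by rewrite !inE => /andP[_ ->].
rewrite [X in _ + X](eq_bigr (fun=> f false)) => [|x]; last first.
  by rewrite !inE => /andP[/negbTE ->].
by rewrite !sumr_const !mulr_natl.
Qed.

Variable S : nat.

Let D := [set x | g x].
Let m := minn #|D| S.

Lemma card_setI_le_min (C : {set T}) : (#|C| <= S)%N -> (#|C :&: D| <= m)%N.
Proof.
move=> CS; rewrite leq_min subset_leq_card ?subsetIr //=.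
exact: leq_trans (subset_leq_card (subsetIl _ _)) CS.
Qed.

Definition top_value (f : bool -> R) := m%:R * f true + (S%:R - m%:R) * f false.

Lemma sum_le_top_value (f : bool -> R) (C : {set T}) :
  0 <= f false <= f true -> (#|C| <= S)%N -> \sum_(x in C) f (g x) <= top_value f.
Proof.
move=> /andP[f0 f01] CS; rewrite sum_bool_split /top_value.
have cm : #|C :&: D|%:R <= m%:R :> R by rewrite ler_nat card_setI_le_min.
have aS : #|C|%:R <= S%:R :> R by rewrite ler_nat.
set c := #|C :&: D|%:R in cm *; set a := #|C|%:R in aS *.
rewrite -subr_ge0 (_ : _ - _ = (m%:R - c) * (f true - f false) + (S%:R - a) * f false).
  by rewrite addr_ge0 // mulr_ge0 // subr_ge0.
by ring.
Qed.

Lemma sum_top_set (f : bool -> R) (B : {set T}) :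
  #|B| = S -> #|B :&: D| = m -> \sum_(x in B) f (g x) = top_value f.
Proof. by move=> cB cBD; rewrite sum_bool_split cB cBD. Qed.

Lemma sum_le_high (f : bool -> R) (C : {set T}) :
  f false <= 0 <= f true -> (#|C| <= S)%N -> \sum_(x in C) f (g x) <= m%:R * f true.
Proof.
move=> /andP[f0 f1] CS; rewrite sum_bool_split.
have cm : #|C :&: D|%:R <= m%:R :> R by rewrite ler_nat card_setI_le_min.
have ca : #|C :&: D|%:R <= #|C|%:R :> R by rewrite ler_nat subset_leq_card ?subsetIl.
set c := #|C :&: D|%:R in cm ca *; set a := #|C|%:R in ca *.
rewrite -subr_ge0 (_ : _ - _ = (m%:R - c) * f true + (a - c) * - f false).
  by rewrite addr_ge0 // mulr_ge0 // ?subr_ge0 ?oppr_ge0.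
by ring.
Qed.

Lemma sum_eq_high (f : bool -> R) (C : {set T}) :
  f false < 0 < f true -> (#|C| <= S)%N -> m%:R * f true <= \sum_(x in C) f (g x) ->
  forall h : bool -> R, \sum_(x in C) h (g x) = m%:R * h true.
Proof.
move=> /andP[f0 f1] CS; rewrite sum_bool_split => hle h; rewrite sum_bool_split.
have cm : #|C :&: D|%:R <= m%:R :> R by rewrite ler_nat card_setI_le_min.
have ca : #|C :&: D|%:R <= #|C|%:R :> R by rewrite ler_nat subset_leq_card ?subsetIl.
set c := #|C :&: D|%:R in cm ca hle *; set a := #|C|%:R in ca hle *.
have ac : a = c by nra.
have cm' : c = m%:R by rewrite ac in hle; nra.
by rewrite ac cm' subrr mul0r addr0.
Qed.

Lemma sum_high_set (h : bool -> R) (B : {set T}) :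
  B \subset D -> #|B| = m -> \sum_(x in B) h (g x) = m%:R * h true.
Proof. by move=> sBD cB; rewrite sum_bool_split (setIidPl sBD) cB subrr mul0r addr0. Qed.

End Counting.

Definition loss_ratio (R : fieldType) (l h s e : R) := l * (s - e) / (h * e + l * (s - e)).

Lemma loss_ratio_le (R : realFieldType) (s n l h p e : R) :
  1 <= s -> 1 <= n -> 0 < l -> l < p * h -> 0 < p -> p <= 1 -> 0 <= e ->
  s * n * p <= e * (s + (n - 1) * p) -> loss_ratio l h s e <= s / (s + n).
Proof.
rewrite /loss_ratio => s1 n1 l0 lph p0 p1 e0 he.
have h0 : 0 < h by rewrite -(@pmulr_rgt0 _ p h p0) (lt_trans l0 lph).
have lh : l < h by apply: lt_le_trans lph _; rewrite ler_piMl // ltW.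
have den : 0 < h * e + l * (s - e).
  by rewrite (_ : _ + _ = l * s + (h - l) * e); [nra | ring].
have mu0 : 0 < s + (n - 1) * p by nra.
have key : n * l * s <= e * (s * h + n * l).
  rewrite -(ler_pM2r mu0); apply: le_trans (_ : s * n * p * (s * h + n * l) <= _).
    rewrite -subr_ge0 (_ : _ - _ = s * n * (s * (p * h - l) + l * p)); last by ring.
    by rewrite !mulr_ge0 ?addr_ge0 ?mulr_ge0; lra.
  by rewrite [leRHS]mulrAC; apply: ler_wpM2r => //; rewrite addr_ge0 ?mulr_ge0 //; lra.
rewrite ler_pdivrMr // mulrAC ler_pdivlMr; last lra.
nra.
Qed.

Lemma loss_ratio_ge (R : realFieldType) (s n d x : R) :
  1 <= s -> 0 <= n -> 0 < d -> (n + 1) * d < 1 -> 0 <= x -> x <= n * d ->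
  s / (s + n) - d <= loss_ratio ((1 - d) * d) 1 s x.
Proof.
rewrite /loss_ratio mul1r => s1 n0 d0 nd x0 xnd.
have d1 : 0 < 1 - d by lra.
have l0 : 0 < (1 - d) * d by rewrite mulr_gt0.
have xs : 0 < s - x by lra.
have den : 0 < x + (1 - d) * d * (s - x) by rewrite ltr_wpDl // mulr_gt0.
rewrite ler_pdivlMr // mulrBl lerBlDr mulrAC ler_pdivrMr; last lra.
rewrite -subr_ge0.
rewrite (_ : _ - _ = n ^+ 2 * d ^+ 3 + d * (s + n) * ((1 - d) * d) * (s - x)
                     + (n * d - x) * (s * (1 - d) - n * d + n * (1 - d) * d)); last by ring.
have slack : 0 <= s * (1 - d) - n * d + n * (1 - d) * d.
  by rewrite addr_ge0 ?mulr_ge0 //; nra.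
by rewrite !addr_ge0 // !mulr_ge0 ?exprn_ge0 //; lra.
Qed.

Definition highs N (v : bids N) : {set 'I_N} := [set n | v n].

Section Moments.
Variables (R : realType) (N : nat) (p : R).

Definition expect (X : bids N -> R) : R := \sum_(v : bids N) prob p v * X v.

Lemma expect_prod (g : 'I_N -> bool -> R) :
  expect (fun v => \prod_l g l (v l)) = \prod_l (p * g l true + (1 - p) * g l false).
Proof.
transitivity (\prod_l \sum_(b : bool) (if b then p else 1 - p) * g l b).
  by rewrite bigA_distr_bigA; apply: eq_bigr => v _; rewrite /prob -big_split.
by apply: eq_bigr => l _; rewrite big_bool.
Qed.

Lemma expect1 : expect (fun=> 1) = 1.
Proof.
transitivity (expect (fun v => \prod_l (fun _ _ => 1 : R) l (v l))).
  by apply: eq_bigr => v _; rewrite big1.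
by rewrite (expect_prod (fun _ _ => 1)) big1 // => l _; rewrite !mulr1 subrKC.
Qed.

Lemma expect_affine (a b : R) (X : bids N -> R) :
  expect (fun v => a + b * X v) = a + b * expect X.
Proof.
rewrite /expect (eq_bigr (fun v => a * prob p v + b * (prob p v * X v))) => [|v _]; last by ring.
have sum_prob : \sum_(v : bids N) prob p v = 1.
  by rewrite -[RHS]expect1; apply: eq_bigr => v _; rewrite mulr1.
by rewrite big_split /= -!mulr_sumr sum_prob mulr1.
Qed.

Lemma expect_all_high (J : {set 'I_N}) :
  expect (fun v => \prod_(j in J) (v j)%:R) = p ^+ #|J|.
Proof.
pose g l (b : bool) : R := if l \in J then b%:R else 1.
transitivity (expect (fun v => \prod_l g l (v l))).
  by apply: eq_bigr => v _; rewrite big_mkcond.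
rewrite expect_prod -prodr_const (big_mkcond (mem J)) /=.
by apply: eq_bigr => l _; rewrite /g; case: (l \in J); rewrite ?mulr1 ?mulr0 ?addr0 ?subrKC.
Qed.

Lemma card_highsE (v : bids N) : #|highs v|%:R = \sum_i (v i)%:R :> R.
Proof.
rewrite -sum1_card natr_sum big_mkcond.
by apply: eq_bigr => i _; rewrite inE; case: (v i).
Qed.

Lemma expect_card_highs : expect (fun v => #|highs v|%:R) = N%:R * p.
Proof.
rewrite /expect; under eq_bigr do rewrite card_highsE big_distrr.
rewrite exchange_big /= (eq_bigr (fun=> p)) ?sumr_const ?card_ord ?mulr_natl // => i _.
by rewrite -[RHS]expr1 -(cards1 i) -expect_all_high; apply: eq_bigr => v _; rewrite big_set1.
Qed.

Lemma expect_card_highs2 :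
  expect (fun v => #|highs v|%:R ^+ 2) = N%:R * (p + (N.-1)%:R * p ^+ 2).
Proof.
have pair_prod (v : bids N) i j : (v i)%:R * (v j)%:R = \prod_(l in [set i; j]) (v l)%:R :> R.
  have [<-|ij] := eqVneq i j; last by rewrite big_setU1 ?inE // big_set1.
  by rewrite setUid big_set1; case: (v i); rewrite ?mulr1 ?mulr0.
transitivity (\sum_(i < N) \sum_(j < N) p ^+ #|[set i; j]|).
  transitivity (\sum_(v : bids N) \sum_(i < N) \sum_(j < N) prob p v * ((v i)%:R * (v j)%:R)).
    apply: eq_bigr => v _; rewrite card_highsE expr2 mulr_suml big_distrr /=.
    by apply: eq_bigr => i _; rewrite mulr_sumr big_distrr.
  rewrite exchange_big; apply: eq_bigr => i _ /=; rewrite exchange_big; apply: eq_bigr => j _ /=.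
  by rewrite -expect_all_high; apply: eq_bigr => v _; rewrite pair_prod.
rewrite mulr_natl -[in RHS](card_ord N) -sumr_const; apply: eq_bigr => i _.
rewrite (bigD1 i) //= setUid cards1 (eq_bigr (fun=> p ^+ 2)) => [|j ji]; last first.
  by rewrite cards2 eq_sym ji.
by rewrite sumr_const cardC1 card_ord mulr_natl.
Qed.

End Moments.

(* min(k, S) >= S k / (S + k - 1), and (2 mu - x) / mu^2 is the tangent of 1/x
   at x = mu. *)
Lemma min_tangent_bound (R : realDomainType) (k S : nat) (mu : R) :
  S%:R * ((2 * mu - S%:R + 1) * k%:R - k%:R ^+ 2) <= (minn k S)%:R * mu ^+ 2.
Proof.
rewrite -subr_ge0; have [kS|Sk] := leqP k S.
  rewrite (_ : _ - _ = k%:R * ((mu - S%:R) ^+ 2 + S%:R * (k%:R - 1))); last by ring.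
  case: k kS => [|k] _; first by rewrite mul0r.
  by rewrite mulr_ge0 // addr_ge0 ?sqr_ge0 // mulr_ge0 // subr_ge0 ler1n.
rewrite (_ : _ - _ = S%:R * ((mu - k%:R) ^+ 2 + k%:R * (S%:R - 1))); last by ring.
case: S Sk => [|S] _; first by rewrite mul0r.
by rewrite mulr_ge0 // addr_ge0 ?sqr_ge0 // mulr_ge0 // subr_ge0 ler1n.
Qed.

Section MeanHighWinners.
Variables (R : realType) (N S : nat) (p : R).
Hypotheses (p_ge0 : 0 <= p) (p_le1 : p <= 1).

Lemma prob_ge0 (v : bids N) : 0 <= prob p v.
Proof. by apply: prodr_ge0 => l _; case: (v l); rewrite ?subr_ge0. Qed.

Lemma ler_expect (X Y : bids N -> R) : (forall v, X v <= Y v) -> expect p X <= expect p Y.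
Proof. by move=> XY; apply: ler_sum => v _; rewrite ler_wpM2l ?prob_ge0. Qed.

Definition mean_high_winners := expect p (fun v : bids N => (minn #|highs v| S)%:R).

Lemma mean_high_winners_ge0 : 0 <= mean_high_winners.
Proof. by apply: sumr_ge0 => v _; rewrite mulr_ge0 ?prob_ge0. Qed.

Lemma mean_high_winners_leNp : mean_high_winners <= N%:R * p.
Proof. by rewrite -expect_card_highs; apply: ler_expect => v; rewrite ler_nat geq_minl. Qed.

Lemma mean_high_winners_lb : (1 <= S)%N ->
  S%:R * N%:R * p <= mean_high_winners * (S%:R + (N.-1)%:R * p).
Proof.
move=> S1; set mu := S%:R + _.
have mu0 : 0 < mu by rewrite ltr_wpDr ?mulr_ge0 ?ltr0n.
rewrite -(ler_pM2r mu0) -[_ * mu * mu]mulrA -expr2.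
set a := 2 * mu - S%:R + 1.
have -> : S%:R * N%:R * p * mu =
    expect p (fun v : bids N => S%:R * (a * #|highs v|%:R - #|highs v|%:R ^+ 2)).
  transitivity (S%:R * a * expect p (fun v : bids N => #|highs v|%:R)
                - S%:R * expect p (fun v : bids N => #|highs v|%:R ^+ 2)).
    by rewrite expect_card_highs expect_card_highs2 /a /mu; ring.
  by rewrite /expect !mulr_sumr -sumrB; apply: eq_bigr => v _; ring.
rewrite /mean_high_winners /expect mulr_suml.
by apply: ler_sum => v _; rewrite -mulrA ler_wpM2l ?prob_ge0 ?min_tangent_bound.
Qed.

End MeanHighWinners.

Section Auction.
Variables (R : realType) (N S : nat) (L H p : R).
Hypotheses (S_le_N : (S <= N)%N) (L_gt0 : 0 < L) (L_lt_H : L < H).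
Hypotheses (p_gt0 : 0 < p) (p_lt1 : p < 1).

Local Notation value := (Defs.val L H).
Local Notation Em := (mean_high_winners N S p).

Definition indicator_rule (B : bids N -> {set 'I_N}) (v : bids N) (A : {set 'I_N}) : R :=
  if A == B v then 1 else 0.

Lemma indicator_rule_alloc (B : bids N -> {set 'I_N}) :
  (forall v, #|B v| <= S)%N -> alloc_rule S (indicator_rule B).
Proof.
move=> BS v; split=> [A|A|]; rewrite /indicator_rule.
- by case: ifP.
- by case: ifP => [/eqP ->|]; rewrite ?eqxx.
by rewrite (bigD1 (B v)) //= eqxx big1 ?addr0 // => A /negbTE ->.
Qed.

Lemma allocated_valueE (pi : bids N -> {set 'I_N} -> R) (v : bids N) :
  \sum_(n < N) Qn pi n v * value (v n) = \sum_A pi v A * \sum_(n in A) value (v n).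
Proof.
under eq_bigr do rewrite /Qn big_distrl /= big_mkcond.
rewrite exchange_big; apply: eq_bigr => A _ /=.
by rewrite big_distrr [RHS]big_mkcond; apply: eq_bigr => n _; case: (n \in A); rewrite ?mul0r.
Qed.

Lemma welfare_indicator_rule (B : bids N -> {set 'I_N}) :
  welfare L H p (indicator_rule B) = expect p (fun v => \sum_(n in B v) value (v n)).
Proof.
apply: eq_bigr => v _; rewrite allocated_valueE (bigD1 (B v)) //= /indicator_rule eqxx mul1r.
by rewrite [X in _ + X]big1 ?addr0 // => A /negbTE ->; rewrite mul0r.
Qed.

Lemma indicator_rule_optimal (B : bids N -> {set 'I_N}) :
  (forall v, #|B v| <= S)%N ->
  (forall (v : bids N) (C : {set 'I_N}), (#|C| <= S)%N ->
     \sum_(n in C) vval L H p (v n) <= \sum_(n in B v) vval L H p (v n)) ->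
  is_optimal S L H p (indicator_rule B).
Proof.
move=> BS Bmax; split; first exact: indicator_rule_alloc.
by move=> v A; rewrite /indicator_rule; case: ifP => [/eqP -> _|]; [apply: Bmax | rewrite eqxx].
Qed.

Definition top_set (v : bids N) : {set 'I_N} :=
  odflt set0 [pick B : {set 'I_N} | (#|B| == S) && (#|B :&: highs v| == minn #|highs v| S)].

Lemma top_setP (v : bids N) :
  #|top_set v| = S /\ #|top_set v :&: highs v| = minn #|highs v| S.
Proof.
have [|B cB cBD] := @exists_card_setI _ (highs v) S; first by rewrite card_ord.
rewrite /top_set; case: pickP => [A /andP[/eqP -> /eqP ->] // | none].
by have := none B; rewrite cB cBD minnC !eqxx.
Qed.

Definition high_set (v : bids N) : {set 'I_N} :=
  odflt set0 [pick B : {set 'I_N} | (B \subset highs v) && (#|B| == minn #|highs v| S)].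

Lemma high_setP (v : bids N) :
  high_set v \subset highs v /\ #|high_set v| = minn #|highs v| S.
Proof.
have [B sB cB] := @exists_subset_card _ (highs v) _ (geq_minl _ S).
rewrite /high_set; case: pickP => [A /andP[-> /eqP ->] // | none].
by have := none B; rewrite sB cB eqxx.
Qed.

Lemma max_value (v : bids N) :
  \big[Num.max/0]_(A : {set 'I_N} | (#|A| <= S)%N) \sum_(n in A) value (v n)
  = top_value v S value.
Proof.
have [cT cTh] := top_setP v; have H_gt0 : 0 < H := lt_trans L_gt0 L_lt_H.
apply/le_anti/andP; split.
  apply: bigmax_le => [|C CS].
    by rewrite /top_value addr_ge0 ?mulr_ge0 ?subr_ge0 ?ler_nat ?geq_minr // ltW.
  by apply: sum_le_top_value => //; rewrite /= !ltW.
by rewrite -(sum_top_set _ cT cTh); apply: le_bigmax_cond; rewrite cT.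
Qed.

Lemma MSWE : MSW N S L H p = L * S%:R + (H - L) * Em.
Proof.
rewrite -expect_affine; apply: eq_bigr => v _; rewrite max_value /top_value /=.
by congr (_ * _); ring.
Qed.

Lemma MSW_ge0 : 0 <= MSW N S L H p.
Proof. by rewrite MSWE addr_ge0 ?mulr_ge0 ?subr_ge0 ?mean_high_winners_ge0 // ltW. Qed.

Lemma vval_low_lt0 : (vval L H p false < 0) = (L < p * H).
Proof. by rewrite /vval pmulr_llt0 ?invr_gt0 ?subr_gt0 // subr_lt0. Qed.

Lemma vval_low_le_high : vval L H p false <= H.
Proof.
rewrite /vval /= ler_pdivrMr ?subr_gt0 // -subr_ge0.
by rewrite (_ : _ - _ = H - L); [rewrite subr_ge0 ltW | ring].
Qed.

Lemma ELR_tilde_opt_le0 (pi : bids N -> {set 'I_N} -> R) :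
  0 <= vval L H p false -> is_tilde_opt N S L H p pi -> ELR N S L H p pi <= 0.
Proof.
move=> w_ge0 [_ pi_best].
have top_opt : is_optimal S L H p (indicator_rule top_set).
  apply: indicator_rule_optimal => [v|v C CS]; first by rewrite (top_setP v).1.
  have [cT cTh] := top_setP v; rewrite (sum_top_set _ cT cTh).
  by apply: sum_le_top_value; rewrite ?w_ge0 ?vval_low_le_high.
have := pi_best _ top_opt; rewrite welfare_indicator_rule.
have -> : expect p (fun v => \sum_(n in top_set v) value (v n)) = MSW N S L H p.
  apply: eq_bigr => v _; have [cT cTh] := top_setP v.
  by rewrite max_value (sum_top_set _ cT cTh).
by move=> MSW_le; rewrite /ELR mulr_le0_ge0 ?invr_ge0 ?MSW_ge0 // subr_le0.
Qed.

Section NegativeLowVirtualValue.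
Hypothesis w_lt0 : vval L H p false < 0.

Lemma optimal_allocated_value (pi : bids N -> {set 'I_N} -> R) (v : bids N) :
  is_optimal S L H p pi ->
  \sum_(n < N) Qn pi n v * value (v n) = (minn #|highs v| S)%:R * H.
Proof.
move=> [pi_alloc pi_max]; have [_ pi_card pi_sum] := pi_alloc v.
have [sh ch] := high_setP v.
rewrite allocated_valueE -[RHS]mul1r -{1}pi_sum mulr_suml; apply: eq_bigr => A _.
have [->|Av] := eqVneq (pi v A) 0; first by rewrite !mul0r.
congr (_ * _); apply: (sum_eq_high (g := v) (f := vval L H p) _ (pi_card _ Av) _ value).
  by rewrite w_lt0 /= (lt_trans L_gt0).
by rewrite -(sum_high_set _ sh ch) pi_max // ch geq_minr.
Qed.

Lemma welfare_optimal (pi : bids N -> {set 'I_N} -> R) :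
  is_optimal S L H p pi -> welfare L H p pi = H * Em.
Proof.
move=> pi_opt; rewrite -[RHS]add0r -expect_affine.
by apply: eq_bigr => v _; rewrite optimal_allocated_value // add0r [H * _]mulrC.
Qed.

Lemma exists_tilde_opt : exists pi, is_tilde_opt N S L H p pi.
Proof.
have high_opt : is_optimal S L H p (indicator_rule high_set).
  apply: indicator_rule_optimal => [v|v C CS]; first by rewrite (high_setP v).2 geq_minr.
  have [sh ch] := high_setP v; rewrite (sum_high_set _ sh ch).
  by apply: sum_le_high; rewrite ?ltW //= (lt_trans L_gt0).
exists (indicator_rule high_set); split=> // pi' pi'_opt.
by rewrite !welfare_optimal.
Qed.

Lemma ELR_optimal (pi : bids N -> {set 'I_N} -> R) :
  is_optimal S L H p pi ->
  ELR N S L H p pi = loss_ratio L H S%:R Em.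
Proof. by move=> pi_opt; rewrite /ELR /loss_ratio MSWE welfare_optimal //; congr (_ / _); ring. Qed.

End NegativeLowVirtualValue.

Lemma ELR_tilde_opt_le (pi : bids N -> {set 'I_N} -> R) :
  (1 <= S)%N -> is_tilde_opt N S L H p pi -> ELR N S L H p pi <= S%:R / (S + N)%:R.
Proof.
move=> S1 pi_opt; have [w_lt0|w_ge0] := ltP (vval L H p false) 0; last first.
  by apply: le_trans (ELR_tilde_opt_le0 w_ge0 pi_opt) _; rewrite divr_ge0.
have N1 : (1 <= N)%N := leq_trans S1 S_le_N.
rewrite ELR_optimal //; last exact: pi_opt.1.
have [p_ge0 p_le1] := (ltW p_gt0, ltW p_lt1).
rewrite natrD; apply: (loss_ratio_le (p := p)); rewrite ?ler1n -?vval_low_lt0 //.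
- exact: mean_high_winners_ge0.
by rewrite -[in N%:R - 1](prednK N1) -natr1 addrK; apply: mean_high_winners_lb.
Qed.

End Auction.

Lemma ELR_tilde_opt_near (R : realType) (N S : nat) (d : R) :
  (1 <= S)%N -> (S <= N)%N -> 0 < d -> (N%:R + 1) * d < 1 ->
  exists pi, is_tilde_opt N S ((1 - d) * d) 1 d pi /\
    S%:R / (S + N)%:R - d <= ELR N S ((1 - d) * d) 1 d pi.
Proof.
move=> S1 SN d0 Nd.
have d1 : d < 1 by apply: le_lt_trans Nd; rewrite ler_peMl ?(ltW d0) // lerDr.
have L0 : 0 < (1 - d) * d by rewrite mulr_gt0 ?subr_gt0.
have L1 : (1 - d) * d < 1 by nra.
have w_lt0 : vval ((1 - d) * d) 1 d false < 0.
  by rewrite vval_low_lt0 // mulr1 gtr_pMl // ltrBlDr ltrDl.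
have [pi pi_opt] := exists_tilde_opt N S L0 L1 w_lt0.
exists pi; split=> //; rewrite (ELR_optimal SN L0 L1 w_lt0 pi_opt.1) natrD.
apply: loss_ratio_ge; rewrite ?ler1n //.
- exact: mean_high_winners_ge0 _ _ (ltW d0) (ltW d1).
exact: mean_high_winners_leNp _ _ (ltW d0) (ltW d1).
Qed.

Theorem proposition4 (R : realType) (N S : nat) :
  (1 <= S)%N -> (S <= N)%N ->
  (forall r : R, 1 < r ->
     forall L H p : R, 0 < L -> L < H -> H <= r * L -> 0 < p -> p < 1 ->
     forall pi, is_tilde_opt N S L H p pi ->
       ELR N S L H p pi <= S%:R / (S + N)%:R)
  /\
  ((forall L H p : R, 0 < L -> L < H -> 0 < p -> p < 1 ->
     forall pi, is_tilde_opt N S L H p pi ->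
       ELR N S L H p pi <= S%:R / (S + N)%:R)
   /\
   (forall eps : R, 0 < eps ->
     exists L H p : R,
       [/\ 0 < L, L < H, 0 < p, p < 1 &
        exists pi, is_tilde_opt N S L H p pi /\
          S%:R / (S + N)%:R - eps < ELR N S L H p pi])).
Proof.
move=> S1 SN.
have upper L H p : 0 < L -> L < H -> 0 < p -> p < 1 ->
    forall pi, is_tilde_opt N S L H p pi -> ELR N S L H p pi <= S%:R / (S + N)%:R.
  by move=> L0 LH p0 p1 pi /(ELR_tilde_opt_le SN L0 LH p0 p1 S1).
split; first by move=> r _ L H p L0 LH _; apply: upper.
split; first exact: upper.
move=> eps eps0.
pose d := eps / (1 + eps * (N%:R + 1)).
have Neps : 0 < eps * (N%:R + 1) by rewrite mulr_gt0 // natr1 ltr0Sn.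
have den0 : 0 < 1 + eps * (N%:R + 1) by rewrite addr_gt0.
have d0 : 0 < d by rewrite divr_gt0.
have d_lt_eps : d < eps by rewrite ltr_pdivrMr // ltr_pMr // ltrDl.
have Nd : (N%:R + 1) * d < 1.
  by rewrite mulrA ltr_pdivrMr // mul1r [_ * eps]mulrC ltrDr.
have d1 : d < 1 by apply: le_lt_trans Nd; rewrite ler_peMl ?(ltW d0) // lerDr.
have [pi [pi_opt pi_ELR]] := ELR_tilde_opt_near S1 SN d0 Nd.
exists ((1 - d) * d), 1, d; split=> //.
- by rewrite mulr_gt0 ?subr_gt0.
- by nra.
by exists pi; split=> //; apply: lt_le_trans pi_ELR; rewrite ltrD2l ltrN2.
Qed.
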